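(* Let $X=\{X_t\}_{t=0}^T$ be a state process with $X_0\in\mathring{\mathcal{X}}_R$ and $X_{t+1}=S(X_t,a_t,\varepsilon_{t+1})$, $t=0,\dots,T-1$, where ${\sf a}=\{a_t\}_{t=0}^{T-1}$ is any $\{\mathcal{F}_t\}$-adapted process. Define $\tau^R=\inf\{t\in\{0,\dots,T\}: X_t\notin\mathring{\mathcal{X}}_R\}$ (with $\inf\emptyset=\infty$), and $X_0^R=X_0$, $X_t^R=X_t\mathbb{I}_{\{\tau^R>t\}}+\mathcal{Q}(X_{\tau^R\wedge t})\mathbb{I}_{\{\tau^R\le t\}}$ for $t=1,\dots,T$. Then: (i) $\{\tau^R\le t\}=\{X_t^R\in\partial\mathcal{X}_R\}$ for $t=1,2,\dots,T$; (ii) $\{\tau^R=t+1\}=\{X_t^R\in\mathring{\mathcal{X}}_R,\ S(X_t^R,a_t,\varepsilon_{t+1})\notin\mathring{\mathcal{X}}_R\}$ for $t=0,1,\dots,T-1$.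
   Context: $(\Omega,\mathcal{F},\mathbb{P})$ is a probability space with filtration $\{\mathcal{F}_t\}_{t=0}^T$; $\varepsilon_1,\dots,\varepsilon_T$ are independent $\mathbb{R}^q$-valued random variables; $S:\mathbb{R}^d\times\mathbb{R}^p\times\mathbb{R}^q\to\mathbb{R}^d$ is measurable and $X$ takes values in $\mathcal{X}\subseteq\mathbb{R}^d$. $\mathcal{X}_R\subseteq\mathcal{X}$ is a bounded set with interior $\mathring{\mathcal{X}}_R$, boundary $\partial\mathcal{X}_R$, and compact strictly convex closure $\mathrm{cl}(\mathcal{X}_R)$; $\mathcal{Q}(x)=\arg\inf_{y\in\mathrm{cl}(\mathcal{X}_R)}\|y-x\|$ is the Euclidean nearest-point projection onto $\mathrm{cl}(\mathcal{X}_R)$, which lies in $\partial\mathcal{X}_R$ for $x\notin\mathring{\mathcal{X}}_R$. *)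

From HB Require Import structures.
From mathcomp Require Import all_boot all_order all_algebra.
From mathcomp Require Import all_classical all_reals all_analysis.
Set Implicit Arguments. Unset Strict Implicit. Unset Printing Implicit Defensive.
Import Order.TTheory GRing.Theory Num.Theory.
Import numFieldNormedType.Exports.
Local Open Scope classical_set_scope.
Local Open Scope ring_scope.

Definition enorm (R : realType) (d : nat) (v : 'rV[R]_d) : R :=
  Num.sqrt (\sum_(i < d) v ord0 i ^+ 2).

Definition boundary (R : realType) (d : nat) (A : set 'rV[R]_d) : set 'rV[R]_d :=
  closure A `\` A°.

Definition strictly_convex (R : realType) (d : nat) (C : set 'rV[R]_d) : Prop :=
  forall x y : 'rV[R]_d, C x -> C y -> x != y ->
    forall l : R, 0 < l < 1 -> (C°) (l *: x + (1 - l) *: y).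

Definition is_nearest_projection (R : realType) (d : nat) (C : set 'rV[R]_d)
  (Q : 'rV[R]_d -> 'rV[R]_d) : Prop :=
  forall x, C (Q x) /\ forall y, C y -> enorm (Q x - x) <= enorm (y - x).

(* First time n in {0,...,T} with P n; None encodes inf emptyset = infinity. *)
Definition first_time (T : nat) (P : nat -> Prop) : option nat :=
  match pselect (exists n, (fun n => (n <= T)%N && `[< P n >]) n) with
  | left h => Some (ex_minn h)
  | right _ => None
  end.

Definition ole (tau : option nat) (t : nat) : Prop :=
  if tau is Some s then (s <= t)%N else False.

Definition XRproc (R : realType) (d : nat) (Omega : Type)
  (Q : 'rV[R]_d -> 'rV[R]_d) (X : nat -> Omega -> 'rV[R]_d)
  (tau : Omega -> option nat) (t : nat) (w : Omega) : 'rV[R]_d :=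
  if t is 0 then X 0%N w else
  match tau w with
  | Some s => if (s <= t)%N then Q (X (minn s t) w) else X t w
  | None => X t w
  end.

From HB Require Import structures.
From mathcomp Require Import all_boot all_order all_algebra.
From mathcomp Require Import all_classical all_reals all_analysis lra.
Import Order.TTheory GRing.Theory Num.Theory.
Import numFieldNormedType.Exports.
Local Open Scope classical_set_scope.
Local Open Scope ring_scope.

(* A nearest point of C to a point x outside the interior of C lies on the
   boundary: were it interior, a short step from it towards x would stay in C
   and come strictly closer to x.  Hence X^R_t, which equals the interior point
   X_t before the stopping time and Q(X_tau) from then on, has left the
   interior exactly when tau <= t; this gives (i).  For (ii), tau = t+1 means
   that X has not stopped by t, so that X^R_t = X_t, and that
   X_{t+1} = S(X_t, a_t, eps_{t+1}) has left the interior. *)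

Section NearestPoint.

Variables (R : realType) (d : nat).

Lemma enormZ (c : R) (v : 'rV[R]_d) : enorm (c *: v) = `|c| * enorm v.
Proof.
rewrite /enorm; under eq_bigr => i _ do rewrite mxE exprMn.
by rewrite -mulr_sumr sqrtrM ?sqr_ge0 // sqrtr_sqr.
Qed.

Lemma enorm_gt0 (v : 'rV[R]_d) : v != 0 -> 0 < enorm v.
Proof.
move=> v0; rewrite /enorm sqrtr_gt0.
have [j vj | v_eq0] := pickP (fun j => v ord0 j != 0); last first.
  case/eqP: v0; apply/matrixP => i j; rewrite (ord1 i) !mxE.
  by move/negbFE/eqP: (v_eq0 j).
rewrite (bigD1 j) //=; apply: ltr_pwDl; first by rewrite lt0r sqrf_eq0 vj sqr_ge0.
by apply: sumr_ge0 => i _; apply: sqr_ge0.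
Qed.

Lemma interior_segment (A : set 'rV[R]_d) x y :
  (A°) y -> exists2 l : R, 0 < l < 1 & A (y + l *: (x - y)).
Proof.
move=> Ay.
have segment_cvg : (fun l : R => y + l *: (x - y)) @ 0^'+ --> y.
  rewrite -[X in _ --> X]addr0; apply: cvgD; first exact: cvg_cst.
  rewrite -(scale0r (x - y)); apply: cvgZ; last exact: cvg_cst.
  exact: cvg_at_right_filter.
have /= Anear := segment_cvg _ Ay.
near (0 : R)^'+ => l; exists l; last by near: l.
by apply/andP; split; near: l; [exact: nbhs_right_gt | exact: nbhs_right_lt].
Unshelve. all: by end_near.
Qed.

Lemma nearest_interior_eq (A : set 'rV[R]_d) x y :
  (A°) y -> (forall z, A z -> enorm (y - x) <= enorm (z - x)) -> y = x.
Proof.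
move=> Ay y_min; apply/eqP; apply: contraT => yx.
have [l /andP[l_gt0 l_lt1] Az] := interior_segment _ x _ Ay.
have := y_min _ Az.
have -> : y + l *: (x - y) - x = (1 - l) *: (y - x).
  by rewrite scalerBl scale1r -(opprB y x) scalerN addrAC.
rewrite enormZ gtr0_norm ?subr_gt0 // mulrBl mul1r.
have : 0 < l * enorm (y - x) by rewrite mulr_gt0 ?enorm_gt0 ?subr_eq0.
lra.
Qed.

Lemma nearest_projection_boundary (C : set 'rV[R]_d) Q x :
  is_nearest_projection (closure C) Q -> ~ (C°) x -> boundary C (Q x).
Proof.
move=> HQ Cx; have [CQx Q_min] := HQ x; split => // CQx_int; apply: Cx.
suff <- : Q x = x by [].
by apply: nearest_interior_eq CQx_int _ => z Cz; apply/Q_min/subset_closure.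
Qed.

End NearestPoint.

Section FirstTime.

Context {T : nat} {P : nat -> Prop}.

Lemma first_timeP {s : nat} : first_time T P = Some s ->
  [/\ (s <= T)%N, P s & forall n, (n < s)%N -> ~ P n].
Proof.
rewrite /first_time; case: pselect => // h [<-].
case: (ex_minnP h) => m /andP[mT /asboolP Pm] m_min; split => // n nm Pn.
have := m_min n; rewrite (leq_trans (ltnW nm) mT) (asboolT Pn) => /(_ isT).
by rewrite leqNgt nm.
Qed.

Lemma first_time_le {n : nat} : (n <= T)%N -> P n -> ole (first_time T P) n.
Proof.
move=> nT Pn; rewrite /ole; case E: (first_time T P) => [s|].
  by have [_ _ s_min] := first_timeP E; rewrite leqNgt; apply/negP => /s_min.
move: E; rewrite /first_time; case: pselect => // -[].
by exists n; rewrite nT asboolT.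
Qed.

Lemma first_time_eqS t : (t < T)%N ->
  first_time T P = Some t.+1 <-> ~ ole (first_time T P) t /\ P t.+1.
Proof.
move=> tT; split => [E | [not_le Pt]].
  by have [_ Pt _] := first_timeP E; rewrite /ole E ltnn.
move: not_le (first_time_le tT Pt); rewrite /ole.
case: (first_time T P) => // s /negP; rewrite -ltnNge => ts st.
by congr Some; apply/eqP; rewrite eqn_leq st ts.
Qed.

End FirstTime.

Lemma XRproc_running {R : realType} {d : nat} {Omega : Type}
    {Q : 'rV[R]_d -> 'rV[R]_d} {X : nat -> Omega -> 'rV[R]_d}
    {tau : Omega -> option nat} {t : nat} {w : Omega} :
  ~ ole (tau w) t -> XRproc Q X tau t w = X t w.
Proof.
rewrite /ole /XRproc; case: t => // t.
by case: (tau w) => // s; case: (s <= t.+1)%N.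
Qed.

Section StoppedProjectedProcess.

Context {R : realType} {d T : nat} {Omega : Type}.
Context {C : set 'rV[R]_d} {Q : 'rV[R]_d -> 'rV[R]_d} {X : nat -> Omega -> 'rV[R]_d}.
Hypothesis HQ : is_nearest_projection (closure C) Q.

Let tau w := first_time T (fun t => ~ (C°) (X t w)).
Let XC := XRproc Q X tau.

Lemma XRproc_stopped_boundary t w :
  (0 < t)%N -> ole (tau w) t -> boundary C (XC t w).
Proof.
rewrite /ole /XC /XRproc; case E: (tau w) => [s|] //; case: t => // t _ st.
have [_ Xs _] := first_timeP E.
by rewrite st (minn_idPl st); exact: nearest_projection_boundary.
Qed.

Lemma XRproc_stoppedE t w :
  (t <= T)%N -> ole (tau w) t <-> ~ (C°) (XC t w).
Proof.
move=> tT; split => [stopped | not_int].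
  have [t0 | t_gt0] := posnP t; last first.
    by case: (XRproc_stopped_boundary _ _ t_gt0 stopped).
  move: stopped; rewrite t0 /ole; case E: (tau w) => [s|] // s0.
  have [_ Xs _] := first_timeP E.
  by move: s0; rewrite leqn0 => /eqP s0; rewrite s0 in Xs.
apply: contrapT => running; apply: not_int.
rewrite /XC XRproc_running //; apply: contrapT => Xt.
exact/running/first_time_le.
Qed.

End StoppedProjectedProcess.

Theorem lemma1 (R : realType) (d p q T : nat) (Omega : Type)
  (S : 'rV[R]_d -> 'rV[R]_p -> 'rV[R]_q -> 'rV[R]_d)
  (Xs XR : set 'rV[R]_d) (Q : 'rV[R]_d -> 'rV[R]_d)
  (X : nat -> Omega -> 'rV[R]_d) (a : nat -> Omega -> 'rV[R]_p)
  (eps : nat -> Omega -> 'rV[R]_q) :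
  XR `<=` Xs ->
  bounded_set XR ->
  compact (closure XR) ->
  strictly_convex (closure XR) ->
  is_nearest_projection (closure XR) Q ->
  (forall t w, (t <= T)%N -> Xs (X t w)) ->
  (forall w, (XR°) (X 0%N w)) ->
  (forall t w, (t < T)%N -> X t.+1 w = S (X t w) (a t w) (eps t.+1 w)) ->
  let tau := fun w => first_time T (fun t => ~ (XR°) (X t w)) in
  let XRt := XRproc Q X tau in
  (forall t, (1 <= t <= T)%N ->
     [set w | ole (tau w) t] = [set w | boundary XR (XRt t w)]) /\
  (forall t, (t < T)%N ->
     [set w | tau w = Some t.+1] =
     [set w | (XR°) (XRt t w) /\ ~ (XR°) (S (XRt t w) (a t w) (eps t.+1 w))]).
Proof.
(* Only the nearest-point property of Q and the dynamics are used: boundedness,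
   compactness and strict convexity merely make Q exist, and (i), (ii) hold
   whatever the state space and the initial state. *)
move=> _ _ _ _ HQ _ _ HS tau XRt.
split => t /[dup] tT; [case/andP => t_gt0 {}tT | move/ltnW => tT'];
  apply/seteqP; split => w /=.
- exact: XRproc_stopped_boundary.
- by case=> _ not_int; apply/(XRproc_stoppedE HQ _ _ tT).
- case/(first_time_eqS _ tT) => running Xt1.
  have XRtE : XRt t w = X t w := XRproc_running (tau := tau) running.
  split; last by rewrite XRtE -HS.
  by apply: contrapT => /(XRproc_stoppedE HQ _ _ tT').
- case=> int_t not_int_next.
  have running : ~ ole (tau w) t by move/(XRproc_stoppedE HQ _ _ tT').
  have XRtE : XRt t w = X t w := XRproc_running (tau := tau) running.
  by apply/(first_time_eqS _ tT); split; last rewrite HS // -XRtE.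
Qed.
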